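(* Let $\alpha$ be a unit-speed curve in $\mathbb{R}^3$ with nonvanishing curvature, let $\alpha_T$ be its tangent indicatrix, and let $\beta$ be a Bertrand-direction curve of $\alpha_T$ (an $X$-direction curve of $\alpha_T$ with $N_\beta=N_T$). Then: (i) $\alpha_T$ is a spherical helix if and only if $\beta$ is a helix; (ii) $\alpha_T$ is a spherical slant helix if and only if $\beta$ is a slant helix.
   Context: Let $\alpha:I\subset\mathbb{R}\to\mathbb{R}^3$ be a unit-speed curve with curvature $\kappa>0$, torsion $\tau$ and Frenet frame $\{T,N,B\}$. The tangent indicatrix of $\alpha$ is the curve $\alpha_T=T$ on the unit sphere. Its arc length is $s_T=\int\kappa\,ds$. Its Frenet apparatus is $\{T_T,N_T,B_T,\kappa_T,\tau_T\}$, with $\frac{dT_T}{ds_T}=\kappa_TN_T$, $\frac{dN_T}{ds_T}=-\kappa_TT_T+\tau_TB_T$ and $\frac{dB_T}{ds_T}=-\tau_TN_T$. Let $x,y,z$ be real functions of $s_T$ with $x^2+y^2+z^2=1$, and set $X=xT_T+yN_T+zB_T$. An integral curve $\beta$ of $X$, meaning $d\beta/ds_T=X$, is an $X$-direction curve of $\alpha_T$. It is regarded as a unit-speed Frenet curve with frame $\{T_\beta=X,N_\beta,B_\beta\}$, curvature $\kappa_\beta>0$ and torsion $\tau_\beta$. $\beta$ is a Bertrand-direction curve of $\alpha_T$ if $N_\beta=N_T$. A curve with curvature $k>0$ and torsion $t$ is a helix if its unit tangent makes a constant angle with a fixed line; equivalently, $t/k$ is constant. It is a slant helix if its principal normal makes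 a constant angle with a fixed line; equivalently, $\frac{k^2}{(k^2+t^2)^{3/2}}(t/k)'$ is constant, where $'$ is the derivative with respect to arc length. A spherical helix (respectively, spherical slant helix) is a helix (respectively, slant helix) lying on a sphere. *)

From Stdlib Require Import Reals.
From Coquelicot Require Import Coquelicot.
Open Scope R_scope.

Definition vec : Type := (R * R * R)%type.
Definition v1 (v : vec) : R := fst (fst v).
Definition v2 (v : vec) : R := snd (fst v).
Definition v3 (v : vec) : R := snd v.
Definition mkv (a b c : R) : vec := (a, b, c).
Definition vadd (u v : vec) : vec := mkv (v1 u + v1 v) (v2 u + v2 v) (v3 u + v3 v).
Definition vscal (a : R) (v : vec) : vec := mkv (a * v1 v) (a * v2 v) (a * v3 v).
Definition vsub (u v : vec) : vec := vadd u (vscal (-1) v).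
Definition dot (u v : vec) : R := v1 u * v1 v + v2 u * v2 v + v3 u * v3 v.
Definition cross (u v : vec) : vec :=
  mkv (v2 u * v3 v - v3 u * v2 v)
      (v3 u * v1 v - v1 u * v3 v)
      (v1 u * v2 v - v2 u * v1 v).
Definition vnorm (v : vec) : R := sqrt (dot v v).

Definition has_vderiv (f : R -> vec) (s : R) (v : vec) : Prop :=
  is_derive (fun t => v1 (f t)) s (v1 v) /\
  is_derive (fun t => v2 (f t)) s (v2 v) /\
  is_derive (fun t => v3 (f t)) s (v3 v).

Definition rbar_ointerval (a b : Rbar) (s : R) : Prop :=
  Rbar_lt a s /\ Rbar_lt s b.

Definition frenet_curve (D : R -> Prop) (c t n b : R -> vec) (k tau : R -> R) : Prop :=
  forall s, D s ->
    has_vderiv c s (t s) /\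
    has_vderiv t s (vscal (k s) (n s)) /\
    has_vderiv n s (vadd (vscal (- k s) (t s)) (vscal (tau s) (b s))) /\
    has_vderiv b s (vscal (- tau s) (n s)) /\
    dot (t s) (t s) = 1 /\ dot (n s) (n s) = 1 /\ dot (t s) (n s) = 0 /\
    b s = cross (t s) (n s) /\
    0 < k s.

Definition helix (D : R -> Prop) (t : R -> vec) : Prop :=
  exists u : vec, vnorm u = 1 /\ exists c : R, forall s, D s -> dot (t s) u = c.

Definition slant_helix (D : R -> Prop) (n : R -> vec) : Prop :=
  exists u : vec, vnorm u = 1 /\ exists c : R, forall s, D s -> dot (n s) u = c.

Definition spherical (D : R -> Prop) (c : R -> vec) : Prop :=
  exists (m : vec) (r : R), 0 < r /\ forall s, D s -> vnorm (vsub (c s) m) = r.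

(** Both T_T and X = T_beta have derivatives (with respect to s_T) that are
    positive multiples of the same vector N_T = N_beta.  Hence, for a fixed unit
    vector u, <T_T, u> is constant iff <N_T, u> vanishes iff <X, u> is constant,
    so alpha_T and beta are helices together; the slant-helix statement is
    immediate from N_beta = N_T.  The sphericity of alpha_T is automatic: it
    lies on the unit sphere.  Constancy along J = s_T(I) is tested on I via the
    chain rule, since s_T' = kappa > 0. *)

From Stdlib Require Import Reals Lra Classical.
From Coquelicot Require Import Coquelicot.
Open Scope R_scope.

Lemma rbar_ointerval_convex (a b : Rbar) s1 s2 s :
  rbar_ointerval a b s1 -> rbar_ointerval a b s2 ->
  Rmin s1 s2 <= s <= Rmax s1 s2 -> rbar_ointerval a b s.
Proof.
  unfold rbar_ointerval, Rmin, Rmax; intros [H1 H2] [H3 H4] H5.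
  destruct (Rle_dec s1 s2), a, b; simpl in *; split; try tauto; lra.
Qed.

Lemma rbar_ointerval_locally (a b : Rbar) s :
  rbar_ointerval a b s -> locally s (rbar_ointerval a b).
Proof.
  intros [Has Hsb].
  apply (filter_and _ _ (open_Rbar_gt' s a Has) (open_Rbar_lt' s b Hsb)).
Qed.

Lemma is_derive_0_constant (a b : Rbar) (h : R -> R) :
  (forall s, rbar_ointerval a b s -> is_derive h s 0) ->
  forall s1 s2, rbar_ointerval a b s1 -> rbar_ointerval a b s2 -> h s1 = h s2.
Proof.
  intros Hd s1 s2 H1 H2.
  destruct (MVT_gen h s1 s2 (fun _ => 0)) as [c [_ Hc]].
  - intros s Hs. apply Hd, (rbar_ointerval_convex a b s1 s2); auto; lra.
  - intros s Hs. apply continuity_pt_filterlim, (ex_derive_continuous (V := R_NormedModule)).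
    exists 0. apply Hd, (rbar_ointerval_convex a b s1 s2); auto.
  - lra.
Qed.

Lemma is_derive_constant_0 (a b : Rbar) (h : R -> R) c s d :
  rbar_ointerval a b s -> (forall t, rbar_ointerval a b t -> h t = c) ->
  is_derive h s d -> d = 0.
Proof.
  intros Hs Hc Hd.
  assert (H0 : is_derive h s 0).
  { apply (is_derive_ext_loc (fun _ => c)); [|apply (is_derive_const c s)].
    eapply filter_imp; [|apply (rbar_ointerval_locally a b s Hs)].
    intros t Ht; symmetry; auto. }
  apply is_derive_unique in Hd; apply is_derive_unique in H0; congruence.
Qed.

Lemma dot_scal_l k v w : dot (vscal k v) w = k * dot v w.
Proof. unfold dot, vscal, mkv, v1, v2, v3; simpl; ring. Qed.

Lemma is_derive_dot_l (f : R -> vec) s v w :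
  has_vderiv f s v -> is_derive (fun t => dot (f t) w) s (dot v w).
Proof.
  intros [H1 [H2 H3]]; unfold dot.
  repeat apply (is_derive_plus (V := R_NormedModule));
    apply (is_derive_scal_l (V := R_NormedModule)); assumption.
Qed.

Lemma is_derive_dot_comp (f : R -> vec) (g : R -> R) s v dg w :
  has_vderiv f (g s) v -> is_derive g s dg ->
  is_derive (fun t => dot (f (g t)) w) s (dot v w * dg).
Proof.
  intros Hf Hg.
  replace (dot v w * dg) with (scal dg (dot v w)) by (cbn; unfold mult; cbn; ring).
  exact (is_derive_comp (fun u => dot (f u) w) g s _ _ (is_derive_dot_l f _ v w Hf) Hg).
Qed.

Section Reparametrization.

Variables (a b : Rbar) (sigma k : R -> R).
Hypothesis sigma_deriv : forall s, rbar_ointerval a b s -> is_derive sigma s (k s).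
Hypothesis k_pos : forall s, rbar_ointerval a b s -> 0 < k s.

Let J u := exists s, rbar_ointerval a b s /\ sigma s = u.

Lemma dot_constant_iff_orthogonal (F N : R -> vec) (kF : R -> R) w :
  (forall u, J u -> has_vderiv F u (vscal (kF u) (N u)) /\ 0 < kF u) ->
  (exists c, forall u, J u -> dot (F u) w = c) <-> (forall u, J u -> dot (N u) w = 0).
Proof.
  intros HF.
  assert (Hd : forall s, rbar_ointerval a b s ->
            is_derive (fun t => dot (F (sigma t)) w) s
              (kF (sigma s) * dot (N (sigma s)) w * k s)).
  { intros s Hs. rewrite <- dot_scal_l.
    apply is_derive_dot_comp; [apply HF; exists s; auto | auto]. }
  split.
  - intros [c Hc] u [s [Hs <-]].
    assert (E : kF (sigma s) * dot (N (sigma s)) w * k s = 0).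
    { apply (is_derive_constant_0 a b (fun t => dot (F (sigma t)) w) c s _ Hs);
        [|exact (Hd s Hs)].
      intros t Ht; apply Hc; exists t; auto. }
    assert (HkF : 0 < kF (sigma s)) by (apply HF; exists s; auto).
    specialize (k_pos s Hs).
    destruct (Rmult_integral _ _ E) as [E' | E']; [|lra].
    destruct (Rmult_integral _ _ E') as [E'' | E'']; [lra | exact E''].
  - intros Horth.
    destruct (classic (exists s0, rbar_ointerval a b s0)) as [[s0 Hs0] | Hempty].
    + exists (dot (F (sigma s0)) w). intros u [s [Hs <-]].
      apply (is_derive_0_constant a b (fun t => dot (F (sigma t)) w)); auto.
      intros t Ht. replace 0 with (kF (sigma t) * dot (N (sigma t)) w * k t).
      * exact (Hd t Ht).
      * rewrite Horth by (exists t; auto). ring.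
    + exists 0. intros u [s [Hs _]]. exfalso; eauto.
Qed.

Lemma helix_iff_common_normal (F G N : R -> vec) (kF kG : R -> R) :
  (forall u, J u -> has_vderiv F u (vscal (kF u) (N u)) /\ 0 < kF u) ->
  (forall u, J u -> has_vderiv G u (vscal (kG u) (N u)) /\ 0 < kG u) ->
  helix J F <-> helix J G.
Proof.
  intros HF HG.
  split; intros [w [Hw Hc]]; exists w; split; try exact Hw.
  - apply (dot_constant_iff_orthogonal G N kG w HG).
    exact (proj1 (dot_constant_iff_orthogonal F N kF w HF) Hc).
  - apply (dot_constant_iff_orthogonal F N kF w HF).
    exact (proj1 (dot_constant_iff_orthogonal G N kG w HG) Hc).
Qed.

End Reparametrization.

Lemma spherical_of_unit (D : R -> Prop) (c : R -> vec) :
  (forall u, D u -> dot (c u) (c u) = 1) -> spherical D c.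
Proof.
  intros Hc. exists (mkv 0 0 0), 1. split; [lra|].
  intros u Hu. unfold vnorm.
  replace (dot (vsub (c u) (mkv 0 0 0)) (vsub (c u) (mkv 0 0 0))) with (dot (c u) (c u))
    by (unfold dot, vsub, vadd, vscal, mkv, v1, v2, v3; simpl; ring).
  rewrite Hc by exact Hu. apply sqrt_1.
Qed.

Lemma slant_helix_ext (D : R -> Prop) (n n' : R -> vec) :
  (forall u, D u -> n u = n' u) -> slant_helix D n <-> slant_helix D n'.
Proof.
  intros Hn.
  split; intros [w [Hw [c Hc]]]; exists w; split; try exact Hw; exists c;
    intros u Hu; [rewrite <- Hn | rewrite Hn]; auto.
Qed.

Theorem theorem5p5
  (a b : Rbar) (Hab : Rbar_lt a b)
  (* the curve alpha on I = (a,b), unit speed, with its Frenet apparatus *)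
  (alpha T N B : R -> vec) (kappa tau : R -> R)
  (Halpha : frenet_curve (rbar_ointerval a b) alpha T N B kappa tau)
  (* arc length s_T of the tangent indicatrix: ds_T/ds = kappa *)
  (sT : R -> R)
  (HsT : forall s, rbar_ointerval a b s -> is_derive sT s (kappa s))
  (* the tangent indicatrix alpha_T, parametrized by s_T, alpha_T(s_T(s)) = T(s) *)
  (alphaT : R -> vec)
  (HalphaT : forall s, rbar_ointerval a b s -> alphaT (sT s) = T s)
  (* its Frenet apparatus, w.r.t. s_T on J = s_T(I) *)
  (TT NT BT : R -> vec) (kappaT tauT : R -> R)
  (HFT : frenet_curve (fun u => exists s, rbar_ointerval a b s /\ sT s = u)
           alphaT TT NT BT kappaT tauT)
  (* the direction X = x T_T + y N_T + z B_T, with x^2+y^2+z^2 = 1 *)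
  (x y z : R -> R)
  (Hxyz : forall u, (exists s, rbar_ointerval a b s /\ sT s = u) ->
            x u ^ 2 + y u ^ 2 + z u ^ 2 = 1)
  (* beta, an X-direction curve, as a unit-speed Frenet curve with T_beta = X *)
  (beta Nbeta Bbeta : R -> vec) (kappabeta taubeta : R -> R)
  (Hbeta : frenet_curve (fun u => exists s, rbar_ointerval a b s /\ sT s = u)
             beta
             (fun u => vadd (vadd (vscal (x u) (TT u)) (vscal (y u) (NT u)))
                            (vscal (z u) (BT u)))
             Nbeta Bbeta kappabeta taubeta)
  (* Bertrand-direction condition: N_beta = N_T *)
  (HBertrand : forall u, (exists s, rbar_ointerval a b s /\ sT s = u) -> Nbeta u = NT u) :
  let J := fun u => exists s, rbar_ointerval a b s /\ sT s = u in
  ((spherical J alphaT /\ helix J TT) <->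
     helix J (fun u => vadd (vadd (vscal (x u) (TT u)) (vscal (y u) (NT u)))
                            (vscal (z u) (BT u)))) /\
  ((spherical J alphaT /\ slant_helix J NT) <-> slant_helix J Nbeta).
Proof.
  intros J.
  assert (Hsph : spherical J alphaT).
  { apply spherical_of_unit. intros u [s [Hs <-]].
    rewrite HalphaT by exact Hs. apply (Halpha s Hs). }
  assert (Hkappa : forall s, rbar_ointerval a b s -> 0 < kappa s)
    by (intros s Hs; apply (Halpha s Hs)).
  assert (HTT : forall u, J u -> has_vderiv TT u (vscal (kappaT u) (NT u)) /\ 0 < kappaT u)
    by (intros u Hu; split; apply (HFT u Hu)).
  assert (HX : forall u, J u ->
             has_vderiv (fun u => vadd (vadd (vscal (x u) (TT u)) (vscal (y u) (NT u)))
                                       (vscal (z u) (BT u)))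
               u (vscal (kappabeta u) (NT u)) /\ 0 < kappabeta u).
  { intros u Hu. rewrite <- HBertrand by exact Hu. split; apply (Hbeta u Hu). }
  pose proof (helix_iff_common_normal a b sT kappa HsT Hkappa _ _ _ _ _ HTT HX) as Hhelix.
  pose proof (slant_helix_ext J Nbeta NT HBertrand) as Hslant.
  tauto.
Qed.
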